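(* Let $\Lambda^*$ be a factorial language in $(\mathbb F_+^d)^N$. If $\Lambda^*$ is sofic, then $\Lambda^*$ coincides with the labeled path space $\{\mathfrak L(\lambda):\lambda\in\Lambda\}$ of its follower set graph $(\Lambda,\mathfrak L)$. Conversely, if $\Lambda^*$ coincides with the labeled path space of a labeled higher rank $N$-graph with finitely many vertices, then $\Lambda^*$ is sofic.
   Context: $\mathbb F_+^d$ is the free semigroup (words) on letters $[d]=\{1,\dots,d\}$ with empty word $\emptyset$. In $(\mathbb F_+^d)^N$: $\underline\mu*\underline\nu=(\mu_1\nu_1,\dots,\mu_N\nu_N)$; $|\underline\mu|=(|\mu_1|,\dots,|\mu_N|)\in\mathbb Z_+^N$; $\delta_i(k)$ is the element with the one-letter word $k$ in coordinate $i$ and $\emptyset$ elsewhere; $\underline\nu$ is a subword of $\underline\mu$ if $\underline\mu=\underline w*\underline\nu*\underline q$. A factorial language (FL) is $\Lambda^*\subseteq(\mathbb F_+^d)^N$ such that for every $i\in[N]$ some $\delta_i(k)\in\Lambda^*$, and subwords of elements of $\Lambda^*$ lie in $\Lambda^*$. For $\underline n\in\mathbb Z_+^N$, $\underline\mu\sim_{\underline n}\underline\nu$ iff $\{\underline w:\underline w*\underline\mu\in\Lambda^*,|\underline w|\le\underline n\}=\{\underline w:\underline w*\underline\nu\in\Lambda^*,|\underline w|\le\underline n\}$, and $\underline\mu\sim\underline\nu$ iff $\{\underline w:\underline w*\underline\mu\in\Lambda^*\}=\{\underline w:\underline w*\underline\nu\in\Lambda^*\}$ (on $\Lambda^*$);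 $\Omega=\Lambda^*/\sim$. $\Lambda^*$ is sofic if there is $\underline m$ with $\sim_{\underline n}=\sim$ for all $\underline n\ge\underline m$ (equivalently $\Omega$ finite). A higher rank $N$-graph: a countable small category $\Lambda$ with functor $d:\Lambda\to\mathbb Z_+^N$ with unique factorization (for $d(\lambda)=\underline m+\underline n$ unique $\lambda=\mu\nu$ with $d(\mu)=\underline m,d(\nu)=\underline n$); paths compose right to left, $\lambda\mu$ defined when $s(\lambda)=r(\mu)$. A labeled higher rank $N$-graph $(\Lambda,\mathfrak L)$: $\Lambda$ arises as the path category of a directed graph with edge set $E=E_1\cup\dots\cup E_N$ (colours) modulo an equivalence on paths, with $d$ counting edges of each colour; $\mathfrak L:E\to(\mathbb F_+^d)^N$ with $\mathfrak L(e)\in\{\delta_i(k):k\in[d]\}$ for $e\in E_i$, extended to paths by $\mathfrak L(e_1\cdots e_n)=\mathfrak L(e_1)*\cdots*\mathfrak L(e_n)$ (vertices labeled by $(\emptyset,\dots,\emptyset)$), and compatible with the equivalence, so $\mathfrak L$ is well-defined on $\Lambda$ with $|\mathfrak L(\lambda)|=d(\lambda)$. Its labeled path space is $\mathfrak L(\Lambda)$. The follower set graph of a sofic $\Lambda^*$: vertex set $\Omega$; for each $[\underline\mu]\in\Omega$ and $(i,k)$ with $\delta_i(k)*\underline\mu\in\Lambda^*$ an edge of colour $i$ labeled $\delta_i(k)$ with source $[\underline\mu]$ and range $[\delta_i(k)*\underline\mu]$; $\Lambda$ is the path category modulo the equivalence generated by $ef\sim f'e'$ whenever $\mathfrak L(e)*\mathfrak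 L(f)=\mathfrak L(f')*\mathfrak L(e')$ (this gives a labeled higher rank $N$-graph). *)

From mathcomp Require Import all_boot.
From Stdlib Require Import FunctionalExtensionality.
Set Implicit Arguments. Unset Strict Implicit. Unset Printing Implicit Defensive.

(** * N-tuples of words over the alphabet [d] = 'I_d  ((F_+^d)^N) *)
Definition mword (d N : nat) := {ffun 'I_N -> seq 'I_d}.

Section Words.
Variables d N : nat.
Implicit Types u v w q mu nu : mword d N.

Definition mcat u v : mword d N := [ffun i => u i ++ v i].
Definition mempty : mword d N := [ffun => [::]].
Definition delta (i : 'I_N) (k : 'I_d) : mword d N :=
  [ffun j => if j == i then [:: k] else [::]].
Definition mlen_le u (n : 'I_N -> nat) := forall i, size (u i) <= n i.
Definition subword v u := exists w q, u = mcat (mcat w v) q.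

Lemma mcatA u v w : mcat (mcat u v) w = mcat u (mcat v w).
Proof. by apply/ffunP => i; rewrite !ffunE catA. Qed.

Definition factorial_language (L : mword d N -> Prop) :=
  (forall i : 'I_N, exists k : 'I_d, L (delta i k)) /\
  (forall u v, L u -> subword v u -> L v).

Definition sim_n (L : mword d N -> Prop) (n : 'I_N -> nat) mu nu :=
  forall w, mlen_le w n -> (L (mcat w mu) <-> L (mcat w nu)).
Definition sim (L : mword d N -> Prop) mu nu :=
  forall w, L (mcat w mu) <-> L (mcat w nu).

Definition sofic (L : mword d N -> Prop) :=
  exists m : 'I_N -> nat, forall n : 'I_N -> nat, (forall i, m i <= n i) ->
    forall mu nu, L mu -> L nu -> (sim_n L n mu nu <-> sim L mu nu).

(** follower set of mu; [mu] = [nu] iff follower mu = follower nu, so a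
    vertex of Omega = L/~ is represented by the follower set of any of
    its representatives. *)
Definition follower (L : mword d N -> Prop) mu : mword d N -> Prop :=
  fun w => L (mcat w mu).

Definition Omega (L : mword d N -> Prop) :=
  {F : mword d N -> Prop | exists mu, L mu /\ F = follower L mu}.

(** edge of colour i labeled delta_i(k) with source [mu], defined iff
    delta_i(k) * mu \in L, i.e. iff delta_i(k) lies in the follower set. *)
Record fedge (L : mword d N -> Prop) := FEdge {
  fe_src : Omega L;
  fe_col : 'I_N;
  fe_letter : 'I_d;
  fe_ok : sval fe_src (delta fe_col fe_letter) }.

Lemma fe_range_proof (L : mword d N -> Prop) (e : fedge L) :
  exists mu, L mu /\
    (fun w => sval (fe_src e) (mcat w (delta (fe_col e) (fe_letter e))))
    = follower L mu.
Proof.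
case: e => [[F HF] i k] /= ok.
case: HF => mu [Lmu EF]; subst F.
exists (mcat (delta i k) mu); split; first by [].
by apply: functional_extensionality => w; rewrite /follower mcatA.
Qed.

(** range of the edge: [delta_i(k) * mu] *)
Definition fe_rng (L : mword d N -> Prop) (e : fedge L) : Omega L :=
  exist _ _ (fe_range_proof e).

Definition fe_lab (L : mword d N -> Prop) (e : fedge L) : mword d N :=
  delta (fe_col e) (fe_letter e).

(** e_1 e_2 ... e_n is a path (composition right to left):
    s(e_j) = r(e_{j+1}) *)
Fixpoint fpath_ok (L : mword d N -> Prop) (es : seq (fedge L)) : Prop :=
  match es with
  | e :: ((e' :: _) as t) => fe_src e = fe_rng e' /\ fpath_ok t
  | _ => True
  end.

Definition path_label (L : mword d N -> Prop) (es : seq (fedge L)) :=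
  foldr (fun e acc => mcat (fe_lab e) acc) mempty es.

(** labeled path space of the follower set graph: labels of vertices
    (empty paths) and of nonempty edge paths.  Since the equivalence
    defining Lambda preserves labels, these are exactly the labels of
    the morphisms of Lambda. *)
Definition follower_path_space (L : mword d N -> Prop) (u : mword d N) :=
  (exists v : Omega L, u = mempty) \/
  (exists es : seq (fedge L), es <> [::] /\ fpath_ok es /\ u = path_label es).

End Words.

Record labeled_hrgraph (d N : nat) := LHRGraph {
  Obj : Type;
  Mor : Type;
  hr : Mor -> Obj;
  hs : Mor -> Obj;
  hid : Obj -> Mor;
  hcomp : Mor -> Mor -> Mor; (* hcomp f g = f g, meaningful if hs f = hr g *)
  hdeg : Mor -> 'I_N -> nat;
  hlab : Mor -> mword d N;
  mor_countable : exists c : Mor -> nat, injective c;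
  hs_id : forall v, hs (hid v) = v;
  hr_id : forall v, hr (hid v) = v;
  hr_comp : forall f g, hs f = hr g -> hr (hcomp f g) = hr f;
  hs_comp : forall f g, hs f = hr g -> hs (hcomp f g) = hs g;
  hcomp_id_l : forall f, hcomp (hid (hr f)) f = f;
  hcomp_id_r : forall f, hcomp f (hid (hs f)) = f;
  hcompA : forall f g h, hs f = hr g -> hs g = hr h ->
     hcomp f (hcomp g h) = hcomp (hcomp f g) h;
  hdeg_id : forall v i, hdeg (hid v) i = 0;
  hdeg_comp : forall f g, hs f = hr g ->
     forall i, hdeg (hcomp f g) i = hdeg f i + hdeg g i;
  unique_fact : forall (l : Mor) (m n : 'I_N -> nat),
     (forall i, hdeg l i = m i + n i) ->
     exists mu nu, [/\ hs mu = hr nu, l = hcomp mu nu,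
                      (forall i, hdeg mu i = m i) & (forall i, hdeg nu i = n i)] /\
     forall mu' nu', hs mu' = hr nu' -> l = hcomp mu' nu' ->
        (forall i, hdeg mu' i = m i) -> (forall i, hdeg nu' i = n i) ->
        mu' = mu /\ nu' = nu;
  (* labeling: a functor into ((F_+^d)^N, * ) with |L(l)| = d(l);
     equivalently the multiplicative extension of an edge labeling with
     L(e) = delta_i(k) for e of colour i *)
  hlab_id : forall v, hlab (hid v) = mempty d N;
  hlab_comp : forall f g, hs f = hr g -> hlab (hcomp f g) = mcat (hlab f) (hlab g);
  hlab_deg : forall f i, size (hlab f i) = hdeg f i
}.

Definition finitely_many_vertices d N (G : labeled_hrgraph d N) :=
  exists (n : nat) (f : 'I_n -> Obj G), forall v : Obj G, exists i, f i = v.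

Definition labeled_path_space d N (G : labeled_hrgraph d N) (u : mword d N) :=
  exists l : Mor G, u = hlab l.

(* A path of the follower set graph with label l that starts at the vertex [mu]
   ends at [l mu]; since every vertex's follower set contains the empty word,
   every path label is a prefix of a word of the language.  Conversely a
   nonempty word u of the language is the label of a path ending at [u], built
   by peeling off one letter at a time.

   For a labeled higher rank graph, unique factorization splits a path with
   label w mu into paths with labels w and mu, so the follower set of mu only
   depends on the set of vertices at which paths labeled mu end.  With finitely
   many vertices there are finitely many follower sets, and a single length
   bound m bounds a witness of every difference between two of them, whence
   ~_n = ~ for all n >= m. *)

From Stdlib Require Import Classical ClassicalEpsilon FunctionalExtensionality.
From mathcomp Require Import all_boot.
Set Implicit Arguments. Unset Strict Implicit. Unset Printing Implicit Defensive.

Section Words.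
Variables d N : nat.
Implicit Types u v w mu : mword d N.

Lemma mcat0m u : mcat (mempty d N) u = u.
Proof. by apply/ffunP => i; rewrite !ffunE. Qed.

Lemma mcatm0 u : mcat u (mempty d N) = u.
Proof. by apply/ffunP => i; rewrite !ffunE cats0. Qed.

Definition msize u := \sum_(j < N) size (u j).

Lemma mword_delta_decomp u : u <> mempty d N ->
  exists i k u', u = mcat (delta i k) u' /\ msize u' < msize u.
Proof.
move=> u_nz; have [i|u0] := pickP (fun j => u j != [::]); last first.
  by case: u_nz; apply/ffunP => j; rewrite ffunE; move: (u0 j); case: (u j).
case ui: (u i) => [|k s] // _.
exists i, k, [ffun j => if j == i then s else u j]; split.
  by apply/ffunP => j; rewrite !ffunE; case: (j =P i) => [->|].
rewrite /msize (bigD1 i) //= [X in _ < X](bigD1 i) //= ffunE eqxx ui addSn ltnS.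
by rewrite leq_add2l; apply/eq_leq/eq_bigr => j /negbTE ji; rewrite ffunE ji.
Qed.

Lemma uniform_witness_bound (T : finType) (D : T -> mword d N -> Prop) :
  exists m, forall p, (exists w, D p w) -> exists w, D p w /\ mlen_le w m.
Proof.
have [wit witP] : exists wit, forall p, (exists w, D p w) -> D p (wit p).
  apply: (choice (fun p w => (exists w, D p w) -> D p w)) => p.
  case: (classic (exists w, D p w)) => [[w Dw]|noD]; first by exists w.
  by exists (mempty d N) => /noD.
exists (fun j => \max_p size (wit p j)) => p /witP Dp.
by exists (wit p); split => // j; apply: (leq_bigmax_cond p).
Qed.

Section Language.
Variable L : mword d N -> Prop.

Lemma sofic_of_finite_followers (T : finType) (F : T -> mword d N -> Prop) :
  (forall mu, L mu -> exists p, forall w, L (mcat w mu) <-> F p w) -> sofic L.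
Proof.
move=> finF.
have [m mP] := uniform_witness_bound (fun p w => ~ (F p.1 w <-> F p.2 w)).
exists m => n le_mn mu nu Lmu Lnu; split=> [simn w|sim_mu_nu w _].
  have [p pP] := finF mu Lmu; have [q qP] := finF nu Lnu.
  apply: NNPP => neq; have /(mP (p, q))[w' [neq' w'_m]] :
      exists w, ~ (F p w <-> F q w) by exists w; rewrite -pP -qP.
  apply: neq'; rewrite /= -pP -qP; apply: simn => j.
  exact: leq_trans (le_mn j).
exact: sim_mu_nu.
Qed.

Definition follower_vertex mu (Lmu : L mu) : Omega L :=
  exist _ (follower L mu) (ex_intro _ mu (conj Lmu erefl)).

Lemma Omega_mempty (v : Omega L) : sval v (mempty d N).
Proof. by case: (svalP v) => mu [Lmu ->]; rewrite /follower mcat0m. Qed.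

Lemma fe_rng_follower (src : Omega L) i k (ok : sval src (delta i k)) mu :
  sval src = follower L mu ->
  sval (fe_rng (FEdge ok)) = follower L (mcat (delta i k) mu).
Proof.
by move=> /= ->; apply: functional_extensionality => w; rewrite /follower mcatA.
Qed.

Lemma fpath_rng_follower (e : fedge L) t : fpath_ok (e :: t) ->
  exists mu,
    L mu /\ sval (fe_rng e) = follower L (mcat (path_label (e :: t)) mu).
Proof.
elim: t e => [|e' t IH] [src i k ok].
  case: (svalP src) => mu [Lmu src_mu] _; exists mu; split=> //.
  by rewrite (fe_rng_follower ok src_mu) /path_label /= mcatm0.
case=> src_e' path_t; change (src = fe_rng e') in src_e'; subst src.
have [mu [Lmu rng_e']] := IH e' path_t; exists mu; split=> //.
by rewrite (fe_rng_follower ok rng_e') -mcatA.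
Qed.

Hypothesis FL : factorial_language L.

Lemma fl_prefix u v : L (mcat u v) -> L u.
Proof.
move=> Luv; apply: (proj2 FL _ _ Luv).
by exists (mempty d N), v; rewrite mcat0m.
Qed.

Lemma fl_suffix u v : L (mcat u v) -> L v.
Proof.
move=> Luv; apply: (proj2 FL _ _ Luv).
by exists u, (mempty d N); rewrite mcatm0.
Qed.

Lemma fpath_label_in_language (e : fedge L) t :
  fpath_ok (e :: t) -> L (path_label (e :: t)).
Proof.
move=> /fpath_rng_follower[mu [_ rng_e]].
have := Omega_mempty (fe_rng e).
by rewrite rng_e /follower mcat0m => /fl_prefix.
Qed.

Lemma fpath_of_word u : L u -> u <> mempty d N ->
  exists (e : fedge L) t, [/\ fpath_ok (e :: t), path_label (e :: t) = u &
                  sval (fe_rng e) = follower L u].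
Proof.
have [n] := ubnP (msize u); elim: n u => // n IH u lt_u_n Lu u_nz.
have [i [k [u' [u_eq lt_u']]]] := mword_delta_decomp u_nz.
have Lu' : L u' by apply: (@fl_suffix (delta i k)); rewrite -u_eq.
have [u'0|u'_nz] := eqVneq u' (mempty d N).
  have ok : sval (follower_vertex Lu') (delta i k).
    by rewrite /= /follower -u_eq.
  have u_delta : u = delta i k by rewrite u_eq u'0 mcatm0.
  exists (FEdge ok), [::]; split=> //.
    by rewrite /path_label /= mcatm0 u_delta.
  by rewrite u_eq (fe_rng_follower (mu := u') ok).
have [|e [t [path_t lab_t rng_e]]] := IH u' _ Lu' (elimN eqP u'_nz).
  exact: leq_trans lt_u' _.
have ok : sval (fe_rng e) (delta i k) by rewrite rng_e /follower -u_eq.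
exists (FEdge ok), (e :: t); split=> //.
  by rewrite u_eq -lab_t.
by rewrite u_eq (fe_rng_follower ok rng_e).
Qed.

Lemma follower_path_spaceP u : L u <-> follower_path_space L u.
Proof.
split=> [Lu|[[v ->]|[[|e t] [_ [path_et ->]]]]] //.
- have [->|u_nz] := eqVneq u (mempty d N).
    by left; exists (follower_vertex Lu).
  have [e [t [? ? _]]] := fpath_of_word Lu (elimN eqP u_nz).
  by right; exists (e :: t).
- by case: v => _ [mu [Lmu _]]; apply: (@fl_prefix _ mu); rewrite mcat0m.
- exact: fpath_label_in_language.
Qed.

End Language.
End Words.

Section LabeledGraph.
Variables (d N : nat) (G : labeled_hrgraph d N).

Lemma hlab_mcat_factor (l : Mor G) (w mu : mword d N) : hlab l = mcat w mu ->
  exists a b : Mor G, [/\ hs a = hr b, hlab a = w & hlab b = mu].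
Proof.
move=> lab_l.
have deg_l i : hdeg l i = size (w i) + size (mu i).
  by rewrite -hlab_deg lab_l ffunE size_cat.
have [a [b [[ab l_ab deg_a _] _]]] := unique_fact deg_l.
have lab_ab : mcat (hlab a) (hlab b) = mcat w mu by rewrite -hlab_comp // -l_ab.
have lab_abi i : (hlab a i == w i) && (hlab b i == mu i).
  rewrite -eqseq_cat ?hlab_deg ?deg_a //.
  by move/ffunP: lab_ab => /(_ i); rewrite !ffunE => ->.
exists a, b; split=> //; apply/ffunP => i.
  by case/andP: (lab_abi i) => /eqP.
by case/andP: (lab_abi i) => _ /eqP.
Qed.

Lemma labeled_path_space_mcat (w mu : mword d N) :
  labeled_path_space G (mcat w mu) <->
  exists a b : Mor G, [/\ hs a = hr b, hlab a = w & hlab b = mu].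
Proof.
split=> [[l /esym /hlab_mcat_factor] //|[a [b [ab <- <-]]]].
by exists (hcomp a b); rewrite hlab_comp.
Qed.

End LabeledGraph.

Lemma sofic_of_labeled_path_space d N (L : mword d N -> Prop)
    (G : labeled_hrgraph d N) :
  finitely_many_vertices G -> (forall u, L u <-> labeled_path_space G u) ->
  sofic L.
Proof.
move=> [n [f f_onto]] L_G.
pose label_from i (w : mword d N) := exists a : Mor G, hs a = f i /\ hlab a = w.
apply: (@sofic_of_finite_followers _ _ _ {set 'I_n}
          (fun S w => exists2 i, i \in S & label_from i w)) => mu _.
pose label_into i := exists b : Mor G, hlab b = mu /\ hr b = f i.
have [into intoP] : exists into : 'I_n -> bool,
    forall i, into i <-> label_into i.
  apply: (choice (fun i (b : bool) => b <-> label_into i)) => i.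
  by case: (classic (label_into i)); [exists true | exists false].
exists [set i | into i] => w; rewrite L_G labeled_path_space_mcat; split.
  case=> a [b [ab aw bmu]]; have [i fi] := f_onto (hr b).
  by exists i; [rewrite inE; apply/intoP; exists b | exists a; rewrite ab].
case=> i; rewrite inE => /intoP[b [bmu rb]] [a [sa aw]].
by exists a, b; rewrite sa rb.
Qed.

Theorem proposition9p7 (d N : nat) (L : mword d N -> Prop) :
  factorial_language L ->
  (sofic L -> forall u : mword d N, L u <-> follower_path_space L u) /\
  (forall G : labeled_hrgraph d N, finitely_many_vertices G ->
     (forall u : mword d N, L u <-> labeled_path_space G u) -> sofic L).
Proof.
move=> FL; split=> [_ u|G]; first exact: follower_path_spaceP.
exact: sofic_of_labeled_path_space.
Qed.
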